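(* Let $X$ be a set of pointed Kripke models, $\Lambda$ a normal modal logic sound with respect to $X$, $D\subseteq\boldsymbol{\mathcal{L}}_{\Lambda}$ a $\Lambda$-representative descriptor for $X$, and $d_w\in\mathcal{D}_{(X,D)}$. Then every clean map $\boldsymbol{f}:X_{\boldsymbol{\mathcal{L}}_{\Lambda}}\to X_{\boldsymbol{\mathcal{L}}_{\Lambda}}$ is uniformly continuous in the metric space $(X_{\boldsymbol{\mathcal{L}}_{\Lambda}},d_w)$ (where $X_D=X_{\boldsymbol{\mathcal{L}}_{\Lambda}}$).
   Context: Signature: countable non-empty sets $\Phi$ (atoms) and $\mathcal{I}$ (indices); $\mathcal{L}$: $\varphi ::= \top\mid p\mid\neg\varphi\mid\varphi\wedge\varphi\mid\Box_i\varphi$. Kripke models $M=(\llbracket M\rrbracket,R,\llbracket\cdot\rrbracket)$ have countable non-empty state sets, relations $R_i$ ($i\in\mathcal{I}$) and atom valuation $\llbracket\cdot\rrbracket$; pointed models $Ms$; standard semantics. For a normal modal logic $\Lambda$, $\boldsymbol{\varphi}$ is the class of formulas $\Lambda$-provably equivalent to $\varphi$, and $\boldsymbol{\mathcal{L}}_{\Lambda}=\{\boldsymbol{\varphi}:\varphi\in\mathcal{L}\}$. A descriptor for $X$ is a set $D\subseteq\boldsymbol{\mathcal{L}}_{\Lambda}$; $X_D=\{\boldsymbol{x}_D:x\in X\}$ with $\boldsymbol{x}_D=\{y\in X:\forall\boldsymbol{\varphi}\in D,\ y\models\varphi\iff x\models\varphi\}$. $D$ is $\Lambda$-representative if for every $\varphi\in\mathcal{L}$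 there is $\{\boldsymbol{\psi}_i\}_{i\in I}\subseteq D$ such that for every $J\subseteq I$ the set $\{\psi_i\}_{i\in J}\cup\{\neg\psi_i\}_{i\in I\setminus J}$ $\Lambda$-entails $\varphi$ or $\neg\varphi$. With an enumeration $\boldsymbol{\varphi}_1,\boldsymbol{\varphi}_2,\dots$ of $D$, a weight function is $w:D\to\mathbb{R}_{>0}$ with $\sum_k w(\boldsymbol{\varphi}_k)<\infty$, and $d_w(\boldsymbol{x},\boldsymbol{y})=\sum_k w(\boldsymbol{\varphi}_k)d_k(\boldsymbol{x},\boldsymbol{y})$ where $d_k=0$ if $x,y$ agree on $\varphi_k$ and $1$ otherwise; $\mathcal{D}_{(X,D)}$ is the set of all such $d_w$. A multi-pointed action model is $\Sigma\Gamma=(\llbracket\Sigma\rrbracket,\mathsf{R},pre,post,\Gamma)$ with $\llbracket\Sigma\rrbracket$ a countable non-empty set of actions, $\mathsf{R}_i\subseteq\llbracket\Sigma\rrbracket^2$ for $i\in\mathcal{I}$, $pre:\llbracket\Sigma\rrbracket\to\mathcal{L}$, $post:\llbracket\Sigma\rrbracket\to\mathcal{L}$ with each $post(\sigma)$ either $\top$ or a conjunction of literals over $\Phi$, and $\emptyset\neq\Gamma\subseteq\llbracket\Sigma\rrbracket$. It is precondition finite if $\{\boldsymbol{pre(\sigma)}:\sigma\in\llbracket\Sigma\rrbracket\}$ is finite; exhaustive over $X$ if every $x\in X$ satisfies $pre(\sigma)$ for some $\sigma\in\Gamma$; deterministic over $X$ if every $x\in X$ satisfies $pre(\sigma)\wedge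 pre(\sigma')\to\bot$ for all $\sigma\neq\sigma'\in\Gamma$. For such $\Sigma\Gamma$ and $Ms\in X$, the product update $Ms\otimes\Sigma\Gamma$ has states $\{(s,\sigma):Ms\models pre(\sigma)\}$, relations $R'_i=\{((s,\sigma),(t,\tau)):(s,t)\in R_i,(\sigma,\tau)\in\mathsf{R}_i\}$, valuation $\llbracket p\rrbracket'=\{(s,\sigma):s\in\llbracket p\rrbracket, post(\sigma)\not\models\neg p\}\cup\{(s,\sigma):post(\sigma)\models p\}$, and designated state $(s,\sigma)$ for the $\sigma\in\Gamma$ with $Ms\models pre(\sigma)$. $\Sigma\Gamma$ is closing over $X$ if $x\otimes\Sigma\Gamma\in X$ for all $x\in X$. A map $\boldsymbol{f}:X_{\boldsymbol{\mathcal{L}}_{\Lambda}}\to X_{\boldsymbol{\mathcal{L}}_{\Lambda}}$ is clean if there is a precondition finite multi-pointed action model $\Sigma\Gamma$ closing, deterministic and exhaustive over $X$ with $\boldsymbol{f}(\boldsymbol{x})=\boldsymbol{y}$ iff $x\otimes\Sigma\Gamma\in\boldsymbol{y}$. *)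

From Stdlib Require Import Reals List ClassicalDescription.
From Coquelicot Require Import Coquelicot.
Set Implicit Arguments.
Open Scope R_scope.

Section Logic.
Variables (At Ag : Type).

Definition countable (T : Type) : Prop :=
  exists g : T -> nat, forall a b, g a = g b -> a = b.

Inductive form : Type :=
| Top : form
| Var : At -> form
| Neg : form -> form
| And : form -> form -> form
| Box : Ag -> form -> form.

Definition Imp (a b : form) : form := Neg (And a (Neg b)).
Definition Iff (a b : form) : form := And (Imp a b) (Imp b a).
Definition Bot : form := Neg Top.

Record model : Type := Model {
  st : Type;
  rel : Ag -> st -> st -> Prop;
  val : At -> st -> Prop }.

Record pmodel : Type := PModel { pm : model; pt : st pm }.

Fixpoint sat (M : model) (s : st M) (phi : form) : Prop :=
  match phi with
  | Top => True
  | Var p => val M p s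
  | Neg a => ~ sat M s a
  | And a b => sat M s a /\ sat M s b
  | Box i a => forall t, rel M i s t -> sat M t a
  end.

Definition psat (x : pmodel) (phi : form) : Prop := sat (pm x) (pt x) phi.

(* Propositional (boolean) evaluation, treating atoms and boxed formulas
   as propositional variables. *)
Fixpoint peval (v : form -> bool) (phi : form) : bool :=
  match phi with
  | Top => true
  | Var p => v (Var p)
  | Neg a => negb (peval v a)
  | And a b => andb (peval v a) (peval v b)
  | Box i a => v (Box i a)
  end.

Definition ptaut (phi : form) : Prop := forall v, peval v phi = true.

Definition pent (phi psi : form) : Prop :=
  forall v, peval v phi = true -> peval v psi = true.

Fixpoint subst (s : At -> form) (phi : form) : form :=
  match phi with
  | Top => Top
  | Var p => s p
  | Neg a => Neg (subst s a)
  | And a b => And (subst s a) (subst s b)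
  | Box i a => Box i (subst s a)
  end.

Definition normal_logic (L : form -> Prop) : Prop :=
  (forall phi, ptaut phi -> L phi) /\
  (forall i a b, L (Imp (Box i (Imp a b)) (Imp (Box i a) (Box i b)))) /\
  (forall a b, L a -> L (Imp a b) -> L b) /\
  (forall i a, L a -> L (Box i a)) /\
  (forall s a, L a -> L (subst s a)).

Definition lequiv (L : form -> Prop) (a b : form) : Prop := L (Iff a b).

Definition sound (L : form -> Prop) (X : pmodel -> Prop) : Prop :=
  forall phi, L phi -> forall x, X x -> psat x phi.

Fixpoint conj (l : list form) : form :=
  match l with nil => Top | a :: l' => And a (conj l') end.

Definition lentails (L : form -> Prop) (G : form -> Prop) (phi : form) : Prop :=
  exists l : list form, (forall a, In a l -> G a) /\ L (Imp (conj l) phi).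

(* A descriptor (a set of L-classes) is encoded by a predicate D on formulas
   closed under L-equivalence (phi in D <-> class of phi in D). *)
Definition class_closed (L : form -> Prop) (D : form -> Prop) : Prop :=
  forall a b, D a -> lequiv L a b -> D b.

Definition representative (L : form -> Prop) (D : form -> Prop) : Prop :=
  forall phi, exists (I : Type) (psi : I -> form),
    (forall i, D (psi i)) /\
    forall J : I -> Prop,
      let G := fun c => (exists i, J i /\ c = psi i) \/
                        (exists i, ~ J i /\ c = Neg (psi i)) in
      lentails L G phi \/ lentails L G (Neg phi).

(* e enumerates the classes of D without repetition (None = no entry, to allow
   finite D). *)
Definition enumeration (L : form -> Prop) (D : form -> Prop)
    (e : nat -> option form) : Prop :=
  (forall k a, e k = Some a -> D a) /\
  (forall a, D a -> exists k b, e k = Some b /\ lequiv L a b) /\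
  (forall k l a b, e k = Some a -> e l = Some b -> lequiv L a b -> k = l).

Definition weight (L : form -> Prop) (D : form -> Prop)
    (e : nat -> option form) (w : form -> R) : Prop :=
  (forall a, D a -> 0 < w a) /\
  (forall a b, D a -> lequiv L a b -> w a = w b) /\
  ex_series (fun k => match e k with Some a => w a | None => 0 end).

Definition dk (x y : pmodel) (a : form) : R :=
  if excluded_middle_informative (psat x a <-> psat y a) then 0 else 1.

(* d_w on representatives *)
Definition dw (e : nat -> option form) (w : form -> R) (x y : pmodel) : R :=
  Series (fun k => match e k with Some a => w a * dk x y a | None => 0 end).

Definition cls (X : pmodel -> Prop) (x : pmodel) : pmodel -> Prop :=
  fun y => X y /\ forall phi, psat y phi <-> psat x phi.

Definition XL (X : pmodel -> Prop) (c : pmodel -> Prop) : Prop :=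
  exists x, X x /\ c = cls X x.

Inductive literal : form -> Prop :=
| lit_pos : forall p, literal (Var p)
| lit_neg : forall p, literal (Neg (Var p)).

Inductive conj_lits : form -> Prop :=
| cl_lit : forall a, literal a -> conj_lits a
| cl_and : forall a b, conj_lits a -> conj_lits b -> conj_lits (And a b).

Record amodel : Type := AModel {
  act : Type;
  arel : Ag -> act -> act -> Prop;
  pre : act -> form;
  post : act -> form;
  des : act -> Prop }.

Definition wf_amodel (A : amodel) : Prop :=
  countable (act A) /\
  (forall s, post A s = Top \/ conj_lits (post A s)) /\
  (exists s, des A s).

Definition precondition_finite (L : form -> Prop) (A : amodel) : Prop :=
  exists l : list form, forall s, exists a, In a l /\ lequiv L (pre A s) a.

Definition exhaustive (X : pmodel -> Prop) (A : amodel) : Prop :=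
  forall x, X x -> exists s, des A s /\ psat x (pre A s).

Definition deterministic (X : pmodel -> Prop) (A : amodel) : Prop :=
  forall x, X x -> forall s s', des A s -> des A s' -> s <> s' ->
    ~ (psat x (pre A s) /\ psat x (pre A s')).

Definition upd (x : pmodel) (A : amodel) (s : act A)
    (h : psat x (pre A s)) : pmodel :=
  let M := pm x in
  let S := {p : st M * act A | sat M (fst p) (pre A (snd p))} in
  {| pm := {| st := S;
              rel := fun i (a b : S) =>
                rel M i (fst (proj1_sig a)) (fst (proj1_sig b)) /\
                arel A i (snd (proj1_sig a)) (snd (proj1_sig b));
              val := fun p (a : S) =>
                (val M p (fst (proj1_sig a)) /\
                 ~ pent (post A (snd (proj1_sig a))) (Neg (Var p))) \/
                pent (post A (snd (proj1_sig a))) (Var p) |};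
     pt := exist (fun p : st M * act A => sat M (fst p) (pre A (snd p)))
                 (pt x, s) h |}.

Definition closing (X : pmodel -> Prop) (A : amodel) : Prop :=
  forall x s (h : psat x (pre A s)), X x -> des A s -> X (upd x A s h).

Definition clean (L : form -> Prop) (X : pmodel -> Prop)
    (f : (pmodel -> Prop) -> (pmodel -> Prop)) : Prop :=
  exists A : amodel,
    wf_amodel A /\ precondition_finite L A /\ closing X A /\
    deterministic X A /\ exhaustive X A /\
    forall x s (h : psat x (pre A s)) y, X x -> des A s -> X y ->
      (f (cls X x) = cls X y <-> cls X y (upd x A s h)).

End Logic.

From Pilot Require Import Defs.
From Stdlib Require Import Reals List Classical ClassicalDescription Lia Lra.
From Coquelicot Require Import Coquelicot.
Open Scope R_scope.

(* A clean map is a product update with a deterministic, precondition-finite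
   action model.  By the reduction axioms, the truth of a formula after the
   update depends on finitely many formulas before it.  Representativeness of D
   and compactness of Cantor space (the fan theorem) show that every formula is
   determined by the first n descriptors of the enumeration.  So if
   d_w(x, y) is below the least weight among the first n descriptors, the images
   agree on the first N descriptors, and their distance is at most the weight
   tail beyond N, which is small for N large. *)

Section Semantics.
Context {At Ag : Type}.

Lemma sat_Imp (M : model At Ag) t a b : sat M t (Imp a b) <-> (sat M t a -> sat M t b).
Proof.
  unfold Imp; cbn [sat]; split.
  - intros H Ha. apply NNPP. intros Hb. apply H. auto.
  - intros H [Ha Hb]. auto.
Qed.

Lemma sat_Iff (M : model At Ag) t a b : sat M t (Iff a b) <-> (sat M t a <-> sat M t b).
Proof. unfold Iff; cbn [sat]. rewrite !sat_Imp. tauto. Qed.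

Lemma sat_conj (M : model At Ag) t l : sat M t (conj l) <-> forall c, In c l -> sat M t c.
Proof.
  induction l as [|a l IH]; cbn [conj sat].
  - split; [intros _ c []|auto].
  - rewrite IH. split.
    + intros [Ha Hl] c [<-|Hc]; auto.
    + intros H. split; [apply H; left|intros c Hc; apply H; right]; auto.
Qed.

Lemma psat_conj_map {T : Type} (x : pmodel At Ag) (g : T -> form At Ag) l :
  psat x (conj (map g l)) <-> forall c, In c l -> psat x (g c).
Proof.
  unfold psat. rewrite sat_conj. split.
  - intros H c Hc. apply H, in_map, Hc.
  - intros H c Hc. apply in_map_iff in Hc as [c' [<- Hc']]. auto.
Qed.

Definition theory_holds (L : form At Ag -> Prop) (x : pmodel At Ag) : Prop :=
  forall th, L th -> psat x th.

Lemma theory_holds_lequiv {L x a b} :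
  theory_holds L x -> lequiv L a b -> (psat x a <-> psat x b).
Proof. intros Hx Hab. apply sat_Iff, Hx, Hab. Qed.

Lemma theory_holds_succ {L x i t} :
  normal_logic L -> theory_holds L x -> rel (pm x) i (pt x) t ->
  theory_holds L (PModel (pm x) t).
Proof. intros (_ & _ & _ & Hnec & _) Hx Hr th Hth. exact (Hx _ (Hnec i th Hth) t Hr). Qed.

Lemma sound_theory_holds {L X x} : sound L X -> X x -> theory_holds L x.
Proof. intros Hs Hx th Hth. exact (Hs th Hth x Hx). Qed.

End Semantics.

Lemma list_uniform_bound {T : Type} (P : T -> nat -> Prop) (l : list T) :
  (forall c m m', P c m -> (m <= m')%nat -> P c m') ->
  (forall c, In c l -> exists m, P c m) -> exists m, forall c, In c l -> P c m.
Proof.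
  intros Hmono. induction l as [|c l IH]; intros Hl.
  - exists O. intros c [].
  - destruct (Hl c (or_introl eq_refl)) as [m1 H1].
    destruct IH as [m2 H2]; [intros c' Hc'; apply Hl; right; exact Hc'|].
    exists (max m1 m2). intros c' [<-|Hc'].
    + apply Hmono with m1; [exact H1|lia].
    + apply Hmono with m2; [auto|lia].
Qed.

Fixpoint sublists {T : Type} (l : list T) : list (list T) :=
  match l with
  | nil => nil :: nil
  | c :: l' => map (cons c) (sublists l') ++ sublists l'
  end.

Lemma sublists_spec {T : Type} (P : T -> Prop) (l : list T) :
  exists S, In S (sublists l) /\ forall c, In c S <-> In c l /\ P c.
Proof.
  induction l as [|c l [S [HS HSP]]]; cbn [sublists].
  - exists nil. split; [left; reflexivity|]. intros c. simpl. tauto.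
  - destruct (classic (P c)) as [Hc|Hc].
    + exists (c :: S). split; [apply in_or_app; left; apply in_map, HS|].
      intros c'. simpl. rewrite HSP. split; [intros [<-|]|intros [[<-|] ?]]; tauto.
    + exists S. split; [apply in_or_app; right; exact HS|].
      intros c'. simpl. rewrite HSP. split; [tauto|intros [[<-|] ?]; tauto].
Qed.

Definition prefix_eq (n : nat) (a b : nat -> bool) : Prop :=
  forall k, (k < n)%nat -> a k = b k.

Section Fan.
Variable B : (nat -> bool) -> nat -> Prop.
Hypothesis B_prefix : forall a b n, prefix_eq n a b -> B a n -> B b n.

Definition unbarred (p : nat -> bool) (m : nat) : Prop :=
  forall N, exists a, prefix_eq m a p /\ forall n, (n <= N)%nat -> ~ B a n.

Definition extend (p : nat -> bool) (m : nat) (bit : bool) : nat -> bool :=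
  fun k => if Nat.eqb k m then bit else p k.

Lemma prefix_eq_extend p m bit : prefix_eq m (extend p m bit) p.
Proof. intros k Hk. unfold extend. destruct (Nat.eqb_spec k m); [lia|reflexivity]. Qed.

Lemma unbarred_extend p m : unbarred p m -> exists bit, unbarred (extend p m bit) (S m).
Proof.
  intros Hp. apply NNPP. intros Hno.
  assert (Hbarred : forall bit, exists N, forall a, prefix_eq (S m) a (extend p m bit) ->
                      exists n, (n <= N)%nat /\ B a n).
  { intros bit. apply NNPP. intros HN. apply Hno. exists bit. intros N.
    apply NNPP. intros Ha. apply HN. exists N. intros a Hpa.
    apply NNPP. intros Hn. apply Ha. exists a. split; [exact Hpa|].
    intros n Hn' HB. apply Hn. eauto. }
  destruct (Hbarred true) as [N1 H1], (Hbarred false) as [N2 H2].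
  destruct (Hp (max N1 N2)) as [a [Hpa Ha]].
  assert (Hext : prefix_eq (S m) a (extend p m (a m))).
  { intros k Hk. unfold extend. destruct (Nat.eqb_spec k m) as [->|]; [reflexivity|].
    apply Hpa. lia. }
  assert (Hbound : forall bit, prefix_eq (S m) a (extend p m bit) ->
                     exists n, (n <= max N1 N2)%nat /\ B a n).
  { intros [|] Hbit; [destruct (H1 a Hbit) as [n [Hn HB]]|destruct (H2 a Hbit) as [n [Hn HB]]];
      exists n; split; auto; lia. }
  destruct (Hbound _ Hext) as [n [Hn HB]]. exact (Ha n Hn HB).
Qed.

Definition next (p : nat -> bool) (m : nat) : nat -> bool :=
  if excluded_middle_informative (unbarred (extend p m true) (S m))
  then extend p m true else extend p m false.

Lemma prefix_eq_next p m : prefix_eq m (next p m) p.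
Proof. unfold next. destruct excluded_middle_informative; apply prefix_eq_extend. Qed.

Lemma unbarred_next p m : unbarred p m -> unbarred (next p m) (S m).
Proof.
  intros Hp. unfold next. destruct excluded_middle_informative as [|Hfalse]; [assumption|].
  destruct (unbarred_extend p m Hp) as [[|] Hbit]; tauto.
Qed.

Fixpoint branch (m : nat) : nat -> bool :=
  match m with
  | O => fun _ => false
  | S m' => next (branch m') m'
  end.

Lemma branch_unbarred : unbarred (fun _ => false) 0 -> forall m, unbarred (branch m) m.
Proof. intros H0 m. induction m as [|m IH]; [exact H0|apply unbarred_next, IH]. Qed.

Lemma branch_stable k m : (k < m)%nat -> branch m k = branch (S k) k.
Proof.
  induction m as [|m IH]; intros Hk; [lia|].
  destruct (Nat.eq_dec k m) as [->|Hne]; [reflexivity|].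
  cbn [branch]. rewrite prefix_eq_next by lia. apply IH. lia.
Qed.

Theorem fan_theorem :
  (forall a, exists n, B a n) -> exists N, forall a, exists n, (n <= N)%nat /\ B a n.
Proof.
  intros Hbar. apply NNPP. intros Hno.
  assert (H0 : unbarred (fun _ => false) 0).
  { intros N. apply NNPP. intros Ha. apply Hno. exists N. intros a.
    apply NNPP. intros Hn. apply Ha. exists a. split; [intros k Hk; lia|].
    intros n Hn' HB. apply Hn. eauto. }
  set (limit := fun k => branch (S k) k).
  destruct (Hbar limit) as [n Hn].
  destruct (branch_unbarred H0 n n) as [a [Hpa Ha]].
  apply (Ha n (le_n n)), (B_prefix limit); [|exact Hn].
  intros k Hk. unfold limit. rewrite <- (branch_stable k n Hk). symmetry. apply Hpa, Hk.
Qed.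

End Fan.

Definition agree_below {At Ag : Type} (e : nat -> option (form At Ag)) (n : nat)
    (x y : pmodel At Ag) : Prop :=
  forall k b, (k < n)%nat -> e k = Some b -> (psat x b <-> psat y b).

Definition follows_signs {At Ag : Type} (e : nat -> option (form At Ag)) (sg : nat -> bool)
    (n : nat) (x : pmodel At Ag) : Prop :=
  forall k b, (k < n)%nat -> e k = Some b -> (psat x b <-> sg k = true).

Lemma agree_below_mono {At Ag : Type} (e : nat -> option (form At Ag)) n n' x y :
  agree_below e n x y -> (n' <= n)%nat -> agree_below e n' x y.
Proof. intros H Hn k b Hk. apply H. lia. Qed.

Lemma follows_signs_mono {At Ag : Type} (e : nat -> option (form At Ag)) sg n n' x :
  follows_signs e sg n x -> (n' <= n)%nat -> follows_signs e sg n' x.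
Proof. intros H Hn k b Hk. apply H. lia. Qed.

Lemma follows_own_signs {At Ag : Type} (e : nat -> option (form At Ag)) x :
  exists sg, forall n, follows_signs e sg n x.
Proof.
  exists (fun k => match e k with
           | Some b => if excluded_middle_informative (psat x b) then true else false
           | None => false
           end).
  intros n k b _ Hb. rewrite Hb.
  destruct excluded_middle_informative; split; auto; discriminate.
Qed.

Section Descriptor.
Context {At Ag : Type} (L : form At Ag -> Prop) (X : pmodel At Ag -> Prop)
        (D : form At Ag -> Prop) (e : nat -> option (form At Ag)).
Hypotheses (hs : sound L X) (hD : representative L D) (he : enumeration L D e).

Lemma lentails_follows_signs sg (G : form At Ag -> Prop) chi :
  (forall c, G c -> exists m, forall z, X z -> follows_signs e sg m z -> psat z c) ->
  lentails L G chi -> exists m, forall z, X z -> follows_signs e sg m z -> psat z chi.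
Proof.
  intros HG [l [Hl Himp]].
  destruct (list_uniform_bound
              (fun c m => forall z, X z -> follows_signs e sg m z -> psat z c) l)
    as [m Hm].
  { intros c m m' H Hle z Hz Hf. apply H; [exact Hz|]. eapply follows_signs_mono; eauto. }
  { intros c Hc. apply HG, Hl, Hc. }
  exists m. intros z Hz Hf. apply (proj1 (sat_Imp _ _ _ _) (hs _ Himp z Hz)).
  apply sat_conj. intros c Hc. exact (Hm c Hc z Hz Hf).
Qed.

(* Representativeness, with [J] the descriptors that [sg] makes true. *)
Lemma follows_signs_decides psi sg : exists n, forall x y, X x -> X y ->
  follows_signs e sg n x -> follows_signs e sg n y -> (psat x psi <-> psat y psi).
Proof.
  destruct (hD psi) as [I [ps [HDps Hdec]]].
  set (J := fun i => exists k b, e k = Some b /\ lequiv L (ps i) b /\ sg k = true).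
  specialize (Hdec J). cbv zeta in Hdec.
  assert (Hlit : forall c, ((exists i, J i /\ c = ps i) \/ (exists i, ~ J i /\ c = Neg (ps i))) ->
            exists m, forall z, X z -> follows_signs e sg m z -> psat z c).
  { intros c [[i [HJ ->]]|[i [HJ ->]]].
    - destruct HJ as (k & b & Hk & Hq & Hsg). exists (S k). intros z Hz Hf.
      apply (theory_holds_lequiv (sound_theory_holds hs Hz) Hq), (Hf k b); auto.
    - destruct he as [_ [he_onto _]].
      destruct (he_onto _ (HDps i)) as (k & b & Hk & Hq).
      exists (S k). intros z Hz Hf Hzi. apply HJ. exists k, b. repeat split; auto.
      apply (Hf k b); auto. apply (theory_holds_lequiv (sound_theory_holds hs Hz) Hq), Hzi. }
  destruct Hdec as [Hpos|Hneg].
  - destruct (lentails_follows_signs sg _ psi Hlit Hpos) as [m Hm].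
    exists m. intros x y Hx Hy Hfx Hfy.
    pose proof (Hm x Hx Hfx). pose proof (Hm y Hy Hfy). tauto.
  - destruct (lentails_follows_signs sg _ (Neg psi) Hlit Hneg) as [m Hm].
    exists m. intros x y Hx Hy Hfx Hfy.
    pose proof (Hm x Hx Hfx) as Hnx. pose proof (Hm y Hy Hfy) as Hny.
    unfold psat in Hnx, Hny |- *. cbn [sat] in Hnx, Hny. tauto.
Qed.

(* Compactness: the fan theorem makes the length in [follows_signs_decides]
   uniform in the signs. *)
Lemma agree_below_decides psi : exists n, forall x y, X x -> X y ->
  agree_below e n x y -> (psat x psi <-> psat y psi).
Proof.
  destruct (fan_theorem
    (fun sg n => forall x y, X x -> X y ->
       follows_signs e sg n x -> follows_signs e sg n y -> (psat x psi <-> psat y psi)))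
    as [N HN].
  - intros a b n Hab HB x y Hx Hy Hfx Hfy.
    apply HB; auto; intros k c Hk Hc; rewrite Hab by exact Hk; auto.
  - intros sg. apply follows_signs_decides.
  - exists N. intros x y Hx Hy Hag.
    destruct (follows_own_signs e x) as [sg Hsg].
    destruct (HN sg) as [n [Hn HB]]. apply HB; auto.
    intros k b Hk Hb. rewrite <- (Hag k b); [apply (Hsg n k b)|lia|]; auto.
Qed.

Lemma agree_below_decides_list (Psi : list (form At Ag)) : exists n, forall x y, X x -> X y ->
  agree_below e n x y -> forall psi, In psi Psi -> (psat x psi <-> psat y psi).
Proof.
  destruct (list_uniform_bound (fun psi n => forall x y, X x -> X y ->
              agree_below e n x y -> (psat x psi <-> psat y psi)) Psi) as [n Hn].
  - intros psi m m' H Hle x y Hx Hy Hag. apply H; auto. eapply agree_below_mono; eauto.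
  - intros psi _. apply agree_below_decides.
  - exists n. intros x y Hx Hy Hag psi Hpsi. apply Hn; auto.
Qed.

End Descriptor.

Section Update.
Context {At Ag : Type} (L : form At Ag -> Prop) (A : amodel At Ag) (l : list (form At Ag)).
Hypotheses (hL : normal_logic L)
           (hpre : forall s, exists a, In a l /\ lequiv L (Defs.pre A s) a).

Definition translates (phi : form At Ag) (tau : act A) (chi : form At Ag) : Prop :=
  forall x (h : psat x (Defs.pre A tau)), theory_holds L x ->
    (psat (upd x A tau h) phi <-> psat x chi).

(* The reduction axioms of product update; precondition finiteness keeps the
   translations of each formula within a finite list. *)
Lemma finite_translation phi :
  exists F, forall tau, exists chi, In chi F /\ translates phi tau chi.
Proof.
  induction phi as [| p | phi IH | phi1 IH1 phi2 IH2 | i phi IH].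
  - exists (Top _ _ :: nil). intros tau. exists (Top _ _). split; [left; reflexivity|].
    intros x h _. simpl. tauto.
  - exists (Top _ _ :: Neg (Top _ _) :: Defs.Var _ p :: nil). intros tau.
    destruct (classic (pent (post A tau) (Defs.Var _ p))) as [Hp|Hp];
      [|destruct (classic (pent (post A tau) (Neg (Defs.Var _ p)))) as [Hn|Hn]].
    + exists (Top _ _). split; [simpl; auto|]. intros x h _. unfold psat. simpl. tauto.
    + exists (Neg (Top _ _)). split; [simpl; auto|]. intros x h _. unfold psat. simpl. tauto.
    + exists (Defs.Var _ p). split; [simpl; auto|]. intros x h _. unfold psat. simpl. tauto.
  - destruct IH as [F HF]. exists (map (@Neg At Ag) F). intros tau.
    destruct (HF tau) as [chi [Hin Htr]]. exists (Neg chi). split; [apply in_map, Hin|].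
    intros x h Hx. specialize (Htr x h Hx). unfold psat in *. cbn [sat]. tauto.
  - destruct IH1 as [F1 HF1], IH2 as [F2 HF2].
    exists (map (fun pr => Defs.And (fst pr) (snd pr)) (list_prod F1 F2)). intros tau.
    destruct (HF1 tau) as [chi1 [Hin1 Htr1]], (HF2 tau) as [chi2 [Hin2 Htr2]].
    exists (Defs.And chi1 chi2).
    split; [apply (in_map (fun pr => Defs.And (fst pr) (snd pr)) _ (chi1, chi2)), in_prod; auto|].
    intros x h Hx. specialize (Htr1 x h Hx). specialize (Htr2 x h Hx).
    unfold psat in *. cbn [sat]. tauto.
  - destruct IH as [F HF].
    set (boxes := fun S : list (form At Ag * form At Ag) =>
                    conj (map (fun pr => Box i (Imp (fst pr) (snd pr))) S)).
    exists (map boxes (sublists (list_prod l F))). intros tau.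
    destruct (sublists_spec (fun pr => exists u, arel A i tau u /\
                lequiv L (Defs.pre A u) (fst pr) /\ translates phi u (snd pr))
                (list_prod l F)) as [S [HS HSspec]].
    exists (boxes S). split; [apply in_map, HS|].
    intros x h Hx. unfold boxes. rewrite psat_conj_map. split.
    + intros Hbox [a chi] Hin t Hr. apply sat_Imp. intros Ha.
      apply HSspec in Hin as [_ (u & Hau & Hq & Htr)]. simpl in Hq, Htr.
      pose proof (theory_holds_succ hL Hx Hr) as Ht.
      assert (h' : psat (PModel (pm x) t) (Defs.pre A u)).
      { apply (theory_holds_lequiv Ht Hq), Ha. }
      apply (Htr _ h' Ht). exact (Hbox (exist _ (t, u) h') (Logic.conj Hr Hau)).
    + intros Hc [[t u] h'] [Hr Hau]. simpl in Hr, Hau, h'.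
      pose proof (theory_holds_succ hL Hx Hr) as Ht.
      destruct (hpre u) as [a [Ha Hq]]. destruct (HF u) as [chi [Hchi Htr]].
      assert (Hin : In (a, chi) S).
      { apply HSspec. split; [apply in_prod; assumption|]. exists u. auto. }
      apply (Htr (PModel (pm x) t) h' Ht).
      apply (proj1 (sat_Imp _ _ _ _) (Hc _ Hin t Hr)).
      apply (theory_holds_lequiv Ht Hq), h'.
Qed.

Context (X : pmodel At Ag -> Prop).
Hypotheses (hs : sound L X) (hdet : deterministic X A).

Lemma deterministic_same_action x y s s' (h : psat x (Defs.pre A s))
    (h' : psat y (Defs.pre A s')) :
  X x -> X y -> des A s -> des A s' ->
  (forall a, In a l -> (psat x a <-> psat y a)) -> s = s'.
Proof.
  intros Hx Hy Hs Hs' Hag. apply NNPP. intros Hne.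
  apply (hdet y Hy s s' Hs Hs' Hne). split; [|exact h'].
  destruct (hpre s) as [a [Ha Hq]].
  apply (theory_holds_lequiv (sound_theory_holds hs Hy) Hq), (Hag a Ha).
  apply (theory_holds_lequiv (sound_theory_holds hs Hx) Hq), h.
Qed.

Lemma update_decided_by_list phi : exists Psi, forall x y s s'
    (h : psat x (Defs.pre A s)) (h' : psat y (Defs.pre A s')),
  X x -> X y -> des A s -> des A s' ->
  (forall psi, In psi Psi -> (psat x psi <-> psat y psi)) ->
  (psat (upd x A s h) phi <-> psat (upd y A s' h') phi).
Proof.
  destruct (finite_translation phi) as [F HF]. exists (l ++ F).
  intros x y s s' h h' Hx Hy Hs Hs' Hag.
  assert (s = s') as <-.
  { apply (deterministic_same_action x y s s' h h'); auto.
    intros a Ha. apply Hag, in_or_app. left. exact Ha. }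
  destruct (HF s) as [chi [Hchi Htr]].
  rewrite (Htr x h (sound_theory_holds hs Hx)), (Htr y h' (sound_theory_holds hs Hy)).
  apply Hag, in_or_app. right. exact Hchi.
Qed.

End Update.

Lemma update_agree_below {At Ag : Type} (L : form At Ag -> Prop) (X : pmodel At Ag -> Prop)
    (D : form At Ag -> Prop) (e : nat -> option (form At Ag)) (A : amodel At Ag)
    (l : list (form At Ag)) :
  normal_logic L -> sound L X -> representative L D -> enumeration L D e ->
  (forall s, exists a, In a l /\ lequiv L (Defs.pre A s) a) -> deterministic X A ->
  forall N, exists n, forall x y s s' (h : psat x (Defs.pre A s)) (h' : psat y (Defs.pre A s')),
    X x -> X y -> des A s -> des A s' ->
    agree_below e n x y -> agree_below e N (upd x A s h) (upd y A s' h').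
Proof.
  intros hL hs hD he hpre hdet N.
  destruct (list_uniform_bound
              (fun k n => forall x y s s' h h', X x -> X y -> des A s -> des A s' ->
                 agree_below e n x y -> forall b, e k = Some b ->
                 (psat (upd x A s h) b <-> psat (upd y A s' h') b))
              (seq 0 N)) as [n Hn].
  - intros k m m' H Hle x y s s' h h' Hx Hy Hs Hs' Hag.
    apply H; auto. eapply agree_below_mono; eauto.
  - intros k _. destruct (e k) as [phi|].
    + destruct (update_decided_by_list L A l hL hpre X hs hdet phi) as [Psi HPsi].
      destruct (agree_below_decides_list L X D e hs hD he Psi) as [n Hn].
      exists n. intros x y s s' h h' Hx Hy Hs Hs' Hag b [= <-].
      apply HPsi; auto.
    + exists O. discriminate.
  - exists n. intros x y s s' h h' Hx Hy Hs Hs' Hag k b Hk Hb.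
    apply (Hn k); auto. apply in_seq. lia.
Qed.

Lemma Series_term_le (a : nat -> R) :
  (forall k, 0 <= a k) -> ex_series a -> forall k, a k <= Series a.
Proof.
  intros Ha Hs k. apply Rle_trans with (sum_f_R0 a k).
  - destruct k as [|k]; [simpl; lra|]. rewrite tech5. pose proof (cond_pos_sum a k Ha). lra.
  - apply sum_incr; [|exact Ha]. apply is_series_Reals, Series_correct, Hs.
Qed.

Lemma Series_tail_lt (a : nat -> R) eps :
  ex_series a -> 0 < eps -> exists N, Series (fun k => a (N + k)%nat) < eps.
Proof.
  intros Hs Heps.
  destruct (proj1 (is_series_Reals a (Series a)) (Series_correct a Hs) eps Heps) as [N HN].
  exists (S N). pose proof (HN N (le_n N)) as HdN. unfold Rdist in HdN.
  rewrite (Series_incr_n a (S N)) in HdN by (lia || exact Hs). simpl Init.Nat.pred in HdN.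
  apply Rabs_def2 in HdN. lra.
Qed.

Lemma dk_eq0 {At Ag : Type} (x y : pmodel At Ag) a :
  (psat x a <-> psat y a) -> dk x y a = 0.
Proof. unfold dk. destruct excluded_middle_informative; tauto. Qed.

Lemma dk_bounds {At Ag : Type} (x y : pmodel At Ag) a : 0 <= dk x y a <= 1.
Proof. unfold dk. destruct excluded_middle_informative; lra. Qed.

Lemma dk_neq {At Ag : Type} (x y : pmodel At Ag) a :
  ~ (psat x a <-> psat y a) -> dk x y a = 1.
Proof. unfold dk. destruct excluded_middle_informative; tauto. Qed.

Section Metric.
Context {At Ag : Type} (L : form At Ag -> Prop) (D : form At Ag -> Prop)
        (e : nat -> option (form At Ag)) (w : form At Ag -> R).
Hypotheses (he : enumeration L D e) (hw : weight L D e w).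

Definition weight_seq (k : nat) : R := match e k with Some a => w a | None => 0 end.

Definition dw_term (x y : pmodel At Ag) (k : nat) : R :=
  match e k with Some a => w a * dk x y a | None => 0 end.

Lemma ex_series_weight_seq : ex_series weight_seq.
Proof. apply hw. Qed.

Lemma weight_pos k a : e k = Some a -> 0 < w a.
Proof. intros Hk. apply hw, (proj1 he k a Hk). Qed.

Lemma dw_term_bounds x y k : 0 <= dw_term x y k <= weight_seq k.
Proof.
  unfold dw_term, weight_seq. destruct (e k) as [a|] eqn:Hk; [|lra].
  pose proof (weight_pos k a Hk). pose proof (dk_bounds x y a). split; [|nra].
  apply Rmult_le_pos; lra.
Qed.

Lemma ex_series_dw_term x y : ex_series (dw_term x y).
Proof.
  apply (@ex_series_le R_AbsRing R_CompleteNormedModule _ weight_seq);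
    [|exact ex_series_weight_seq].
  intros k. change (norm (dw_term x y k)) with (Rabs (dw_term x y k)).
  rewrite Rabs_pos_eq; apply dw_term_bounds.
Qed.

Lemma agree_below_of_dw_lt n x y :
  (forall k b, (k < n)%nat -> e k = Some b -> dw e w x y < w b) -> agree_below e n x y.
Proof.
  intros Hsmall k b Hk Hb. apply NNPP. intros Hne.
  assert (Hterm : dw_term x y k = w b) by (unfold dw_term; rewrite Hb, dk_neq; auto; ring).
  pose proof (Series_term_le (dw_term x y) (fun k => proj1 (dw_term_bounds x y k))
                (ex_series_dw_term x y) k) as Hle.
  specialize (Hsmall k b Hk Hb). unfold dw in Hsmall. fold (dw_term x y) in Hsmall. lra.
Qed.

Lemma dw_le_weight_tail N x y :
  agree_below e N x y -> dw e w x y <= Series (fun k => weight_seq (N + k)).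
Proof.
  intros Hag. unfold dw. fold (dw_term x y).
  rewrite (Series_incr_n_aux (dw_term x y) N).
  - apply Series_le; [intros k; apply dw_term_bounds|].
    apply (ex_series_incr_n weight_seq N), ex_series_weight_seq.
  - intros k Hk. unfold dw_term. destruct (e k) as [b|] eqn:Hb; [|reflexivity].
    rewrite dk_eq0 by exact (Hag k b Hk Hb). ring.
Qed.

Lemma weights_lower_bound n :
  exists delta, 0 < delta /\ forall k b, (k < n)%nat -> e k = Some b -> delta <= w b.
Proof.
  induction n as [|n [delta [Hdelta Hle]]].
  - exists 1. split; [lra|]. intros k b Hk. lia.
  - destruct (e n) as [a|] eqn:Hn.
    + exists (Rmin delta (w a)). split; [apply Rmin_glb_lt; auto; apply (weight_pos n a Hn)|].
      intros k b Hk Hb. destruct (Nat.eq_dec k n) as [->|Hne].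
      * rewrite Hn in Hb. injection Hb as <-. apply Rmin_r.
      * apply Rle_trans with delta; [apply Rmin_l|]. apply (Hle k); auto. lia.
    + exists delta. split; [exact Hdelta|]. intros k b Hk Hb.
      destruct (Nat.eq_dec k n) as [->|Hne]; [congruence|]. apply (Hle k); auto. lia.
Qed.

End Metric.

Theorem proposition34 (At Ag : Type)
  (hAt : countable At) (iAt : inhabited At)
  (hAg : countable Ag) (iAg : inhabited Ag)
  (X : pmodel At Ag -> Prop)
  (hX : forall x, X x -> countable (st (pm x)))
  (L : form At Ag -> Prop) (hL : normal_logic L) (hsound : sound L X)
  (D : form At Ag -> Prop) (hDc : class_closed L D) (hD : representative L D)
  (e : nat -> option (form At Ag)) (he : enumeration L D e)
  (w : form At Ag -> R) (hw : weight L D e w)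
  (f : (pmodel At Ag -> Prop) -> (pmodel At Ag -> Prop))
  (hf : forall c, XL X c -> XL X (f c))
  (hclean : clean L X f) :
  forall eps, 0 < eps -> exists delta, 0 < delta /\
    forall x y x' y', X x -> X y -> X x' -> X y' ->
      f (cls X x) = cls X x' -> f (cls X y) = cls X y' ->
      dw e w x y < delta -> dw e w x' y' < eps.
Proof.
  intros eps Heps.
  destruct hclean as (A & _ & [l hpre] & _ & hdet & hexh & hupd).
  destruct (Series_tail_lt _ eps (ex_series_weight_seq L D e w hw) Heps) as [N HN].
  destruct (update_agree_below L X D e A l hL hsound hD he hpre hdet N) as [n Hn].
  destruct (weights_lower_bound L D e w he hw n) as [delta [Hdelta Hmin]].
  exists delta. split; [exact Hdelta|].
  intros x y x' y' Hx Hy Hx' Hy' Hfx Hfy Hxy.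
  destruct (hexh x Hx) as [s [Hs h]], (hexh y Hy) as [s' [Hs' h']].
  destruct (proj1 (hupd x s h x' Hx Hs Hx') Hfx) as [_ Hx'upd].
  destruct (proj1 (hupd y s' h' y' Hy Hs' Hy') Hfy) as [_ Hy'upd].
  assert (Hagree : agree_below e n x y).
  { apply (agree_below_of_dw_lt L D e w he hw). intros k b Hk Hb.
    apply Rlt_le_trans with (1 := Hxy), (Hmin k b Hk Hb). }
  apply Rle_lt_trans with (2 := HN), (dw_le_weight_tail L D e w he hw).
  intros k b Hk Hb. rewrite <- Hx'upd, <- Hy'upd.
  exact (Hn x y s s' h h' Hx Hy Hs Hs' Hagree k b Hk Hb).
Qed.
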